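(* Let $\mathcal{H}$ be a finite-dimensional complex Hilbert space, let $s \geq 2$ be an integer and set $\epsilon = \frac{1}{s}$. Let $P_1, \ldots, P_s$ and $P$ be orthogonal projectors on $\mathcal{H}$ such that $P_i P_j = P_j P_i$ for all $i, j$, $P P_i = P$ for all $1 \leq i \leq s$, and $P_i P_j = P$ for all $i \neq j$. Then \[ \max_{\ket{\psi}} \Delta\left(P\ket{\psi}\bra{\psi}P,\ \frac{1}{s}\sum_{i=1}^{s} P_i \ket{\psi}\bra{\psi} P_i\right) \leq \sqrt{\epsilon}, \] where the maximum ranges over all unit vectors $\ket{\psi} \in \mathcal{H}$.
   Context: For (possibly subnormalised) positive semidefinite operators $\rho_0, \rho_1$ on $\mathcal{H}$, $\Delta(\rho_0,\rho_1) := \frac{1}{2}\lVert \rho_0 - \rho_1 \rVert_1$ denotes the trace-norm distance. In the paper's notation $P\ket{\psi}$ in the first argument of $\Delta$ stands for the (subnormalised) state $P\ket{\psi}\bra{\psi}P$. *)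

(* Finite-dimensional complex Hilbert space = C^n (column vectors),
   C an arbitrary numClosedFieldType (e.g. complex numbers). *)
From HB Require Import structures.
From mathcomp Require Import all_boot all_order all_algebra.
From Stdlib Require Import ClassicalEpsilon.
Set Implicit Arguments. Unset Strict Implicit. Unset Printing Implicit Defensive.
Import Order.TTheory GRing.Theory Num.Theory.
Local Open Scope ring_scope.

Definition adjmx (C : numClosedFieldType) m n (A : 'M[C]_(m, n)) : 'M[C]_(n, m) :=
  (map_mx Num.conj A)^T.

Definition psdmx (C : numClosedFieldType) n (A : 'M[C]_n) : Prop :=
  adjmx A = A /\ forall v : 'cV[C]_n, 0 <= (adjmx v *m A *m v) 0 0.

Definition orth_proj (C : numClosedFieldType) n (P : 'M[C]_n) : Prop :=
  P *m P = P /\ adjmx P = P.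

Definition psd_sqrt (C : numClosedFieldType) n (A : 'M[C]_n) : 'M[C]_n :=
  epsilon (inhabits 0) (fun B : 'M[C]_n => psdmx B /\ B *m B = A).

Definition trnorm (C : numClosedFieldType) n (X : 'M[C]_n) : C :=
  \tr (psd_sqrt (adjmx X *m X)).

Definition trdist (C : numClosedFieldType) n (rho0 rho1 : 'M[C]_n) : C :=
  trnorm (rho0 - rho1) / 2.

Definition ketbra (C : numClosedFieldType) n (psi : 'cV[C]_n) : 'M[C]_n :=
  psi *m adjmx psi.

Definition unit_vec (C : numClosedFieldType) n (psi : 'cV[C]_n) : Prop :=
  (adjmx psi *m psi) 0 0 = 1.

From HB Require Import structures.
From mathcomp Require Import all_boot all_order all_algebra.
From Stdlib Require Import ClassicalEpsilon.
From mathcomp Require Import ring.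
Import Order.TTheory GRing.Theory Num.Theory.
Local Open Scope ring_scope.
Set Implicit Arguments. Unset Strict Implicit. Unset Printing Implicit Defensive.

(* Write a = P psi and b_i = (P_i - P) psi.  The hypotheses make P, P_1 - P, ...,
   P_s - P pairwise orthogonal projections, so |a|^2 + sum_i |b_i|^2 <= 1 and
   |b|^2 = sum_i |b_i|^2 for b = sum_i b_i.  As P_i psi = a + b_i, the difference
   of the two states is -(1/s) (a b^* + b a^* + sum_i b_i b_i^* ).  By the polar
   decomposition, the trace norm of sum_k u_k v_k^* is Re tr (W X V^* ) for
   contractions W, V, hence at most sum_k (|u_k|^2 + |v_k|^2) / 2.  Splitting 1/s
   as (1/sqrt s)^2 between the two factors of each term gives Delta <= 1/s. *)

Section Adjoint.
Variable C : numClosedFieldType.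

Lemma adjmxE m n (A : 'M[C]_(m, n)) i j : adjmx A i j = (A j i)^*.
Proof. by rewrite /adjmx !mxE. Qed.

Lemma adjmx_trmxC m n (A : 'M[C]_(m, n)) : adjmx A = (A ^T ^ Num.conj)%sesqui.
Proof. by apply/matrixP => i j; rewrite adjmxE !mxE. Qed.

Lemma adjmxK m n (A : 'M[C]_(m, n)) : adjmx (adjmx A) = A.
Proof. by apply/matrixP => i j; rewrite !adjmxE conjCK. Qed.

Lemma adjmxM m n p (A : 'M[C]_(m, n)) (B : 'M[C]_(n, p)) :
  adjmx (A *m B) = adjmx B *m adjmx A.
Proof.
apply/matrixP => i j; rewrite !adjmxE !mxE rmorph_sum /=.
by apply: eq_bigr => k _; rewrite !adjmxE rmorphM mulrC.
Qed.

Lemma adjmxD m n (A B : 'M[C]_(m, n)) : adjmx (A + B) = adjmx A + adjmx B.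
Proof. by apply/matrixP => i j; rewrite !adjmxE !mxE rmorphD. Qed.

Lemma adjmxN m n (A : 'M[C]_(m, n)) : adjmx (- A) = - adjmx A.
Proof. by apply/matrixP => i j; rewrite !adjmxE !mxE rmorphN. Qed.

Lemma adjmxB m n (A B : 'M[C]_(m, n)) : adjmx (A - B) = adjmx A - adjmx B.
Proof. by rewrite adjmxD adjmxN. Qed.

Lemma adjmxZ m n a (A : 'M[C]_(m, n)) : adjmx (a *: A) = a^* *: adjmx A.
Proof. by apply/matrixP => i j; rewrite !adjmxE !mxE rmorphM. Qed.

Lemma adjmx1 n : adjmx (1%:M : 'M[C]_n) = 1%:M.
Proof.
apply/matrixP => i j; rewrite adjmxE !mxE eq_sym.
by case: (_ == _); rewrite ?rmorph1 ?rmorph0.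
Qed.

Lemma adjmx_diag n (d : 'rV[C]_n) : adjmx (diag_mx d) = diag_mx (map_mx Num.conj d).
Proof.
apply/matrixP => i j; rewrite adjmxE !mxE eq_sym.
by case: eqP => [->|_]; rewrite ?mulr1n ?mulr0n ?rmorph0.
Qed.

Lemma adjmx_delta m n (i : 'I_m) (j : 'I_n) :
  adjmx (delta_mx i j : 'M[C]_(m, n)) = delta_mx j i.
Proof.
apply/matrixP => a b; rewrite adjmxE !mxE andbC.
by case: (_ && _); rewrite ?rmorph1 ?rmorph0.
Qed.

Lemma adjmx_sum m n I (r : seq I) (F : I -> 'M[C]_(m, n)) :
  adjmx (\sum_(i <- r) F i) = \sum_(i <- r) adjmx (F i).
Proof.
apply: (big_morph _ (@adjmxD m n)).
by apply/matrixP => i j; rewrite adjmxE !mxE rmorph0.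
Qed.

End Adjoint.

Section InnerProduct.
Variables (C : numClosedFieldType) (n : nat).
Implicit Types (u v w : 'cV[C]_n) (A : 'M[C]_n).

Definition dotv u v : C := (adjmx u *m v) 0 0.

Lemma dotvE u v : dotv u v = \sum_i (u i 0)^* * v i 0.
Proof. by rewrite /dotv mxE; apply: eq_bigr => i _; rewrite adjmxE. Qed.

Lemma conj_dotv u v : (dotv u v)^* = dotv v u.
Proof.
rewrite !dotvE rmorph_sum; apply: eq_bigr => i _.
by rewrite rmorphM /= conjCK mulrC.
Qed.

Lemma dotv_ge0 u : 0 <= dotv u u.
Proof. by rewrite dotvE; apply: sumr_ge0 => i _; rewrite mulrC -normCK exprn_ge0. Qed.

Lemma dotvDl u v w : dotv (u + v) w = dotv u w + dotv v w.
Proof. by rewrite /dotv adjmxD mulmxDl mxE. Qed.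

Lemma dotvDr u v w : dotv w (u + v) = dotv w u + dotv w v.
Proof. by rewrite /dotv mulmxDr mxE. Qed.

Lemma dotvNl u w : dotv (- u) w = - dotv u w.
Proof. by rewrite /dotv adjmxN mulNmx mxE. Qed.

Lemma dotvNr u w : dotv w (- u) = - dotv w u.
Proof. by rewrite /dotv mulmxN mxE. Qed.

Lemma dotvZZ a u v : dotv (a *: u) (a *: v) = `|a| ^+ 2 * dotv u v.
Proof.
by rewrite /dotv adjmxZ -scalemxAl -scalemxAr scalerA mxE normCK (mulrC a).
Qed.

Lemma dotv_sumr I (r : seq I) (F : I -> 'cV[C]_n) u :
  dotv u (\sum_(i <- r) F i) = \sum_(i <- r) dotv u (F i).
Proof. by rewrite /dotv mulmx_sumr summxE. Qed.

Lemma dotv_suml I (r : seq I) (F : I -> 'cV[C]_n) u :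
  dotv (\sum_(i <- r) F i) u = \sum_(i <- r) dotv (F i) u.
Proof.
rewrite -[LHS]conj_dotv dotv_sumr rmorph_sum /=.
by apply: eq_bigr => i _; rewrite conj_dotv.
Qed.

Lemma dotv_adjmx A u v : dotv (A *m u) v = dotv u (adjmx A *m v).
Proof. by rewrite /dotv adjmxM mulmxA. Qed.

Lemma dotv_amgm u v : dotv u v + dotv v u <= dotv u u + dotv v v.
Proof.
rewrite -subr_ge0.
suff -> : dotv u u + dotv v v - (dotv u v + dotv v u) = dotv (u - v) (u - v).
  exact: dotv_ge0.
by rewrite !dotvDl !dotvDr !dotvNl !dotvNr opprK; ring.
Qed.

End InnerProduct.

Section Projections.
Variables (C : numClosedFieldType) (n : nat).
Implicit Types (u : 'cV[C]_n) (R W : 'M[C]_n).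

Lemma orth_proj_dotv R u : orth_proj R -> dotv u (R *m u) = dotv (R *m u) (R *m u).
Proof. by case=> RR aR; rewrite dotv_adjmx aR mulmxA RR. Qed.

Lemma orth_proj1B R : orth_proj R -> orth_proj (1%:M - R).
Proof.
case=> RR aR; split; last by rewrite adjmxB adjmx1 aR.
by rewrite mulmxBl mul1mx !mulmxBr mulmx1 RR subrr subr0.
Qed.

Definition contractive R := forall u, dotv (R *m u) (R *m u) <= dotv u u.

Lemma orth_proj_contractive R : orth_proj R -> contractive R.
Proof.
move=> hR u; rewrite -orth_proj_dotv //.
have := dotv_ge0 ((1%:M - R) *m u).
rewrite -orth_proj_dotv; last exact: orth_proj1B.
by rewrite mulmxBl mul1mx dotvDr dotvNr subr_ge0.
Qed.

Lemma unitary_contractive R : adjmx R *m R = 1%:M -> contractive R.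
Proof. by move=> hR u; rewrite dotv_adjmx mulmxA hR mul1mx. Qed.

Lemma partial_isometry_contractive W :
  W *m adjmx W *m W = W -> contractive (adjmx W).
Proof.
move=> hW u; have hR : orth_proj (W *m adjmx W).
  by split; [rewrite mulmxA hW | rewrite adjmxM adjmxK].
by rewrite dotv_adjmx adjmxK mulmxA orth_proj_dotv //; apply: orth_proj_contractive.
Qed.

Lemma dotv_sum_orth (I : finType) (x : I -> 'cV[C]_n) :
  (forall j k, j != k -> dotv (x j) (x k) = 0) ->
  dotv (\sum_k x k) (\sum_k x k) = \sum_k dotv (x k) (x k).
Proof.
move=> hx; rewrite dotv_suml; apply: eq_bigr => j _.
by rewrite dotv_sumr (bigD1 j) //= big1 ?addr0 // => k kj; rewrite hx // eq_sym.
Qed.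

Section OrthogonalFamily.
Variables (I : finType) (R : I -> 'M[C]_n).
Hypotheses (projR : forall k, orth_proj (R k))
  (orthR : forall j k, j != k -> R j *m R k = 0).

Lemma orth_proj_sum : orth_proj (\sum_k R k).
Proof.
split; last by rewrite adjmx_sum; apply: eq_bigr => k _; rewrite (projR k).2.
rewrite mulmx_suml; apply: eq_bigr => j _.
rewrite mulmx_sumr (bigD1 j) //= (projR j).1 big1 ?addr0 // => k kj.
by rewrite orthR // eq_sym.
Qed.

Lemma bessel_inequality u : \sum_k dotv (R k *m u) (R k *m u) <= dotv u u.
Proof.
rewrite -dotv_sum_orth -?mulmx_suml; first exact: orth_proj_contractive orth_proj_sum u.
move=> j k jk; rewrite dotv_adjmx (projR j).2 mulmxA orthR // mul0mx.
by rewrite /dotv mulmx0 mxE.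
Qed.

End OrthogonalFamily.

End Projections.

Section PositiveSquareRoot.
Variables (C : numClosedFieldType) (n : nat).
Implicit Types (A U X : 'M[C]_n) (v : 'cV[C]_n).

Lemma hermitian_spectral A : adjmx A = A ->
  exists U (d : 'rV[C]_n), [/\ adjmx U *m U = 1%:M, U *m adjmx U = 1%:M &
     A = adjmx U *m diag_mx d *m U].
Proof.
move=> hA; have nA : A \is normalmx by apply/normalmxP; rewrite -adjmx_trmxC hA.
have := orthomx_spectralP nA; set U := spectralmx A => eA.
have Uu : U \is unitarymx := spectral_unitarymx A.
have iU : invmx U = adjmx U by rewrite adjmx_trmxC invmx_unitary.
exists U, (spectral_diag A); split; last by rewrite -iU.
- by rewrite -iU mulVmx // unitarymx_unit.
- by rewrite adjmx_trmxC; apply/unitarymxP.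
Qed.

Lemma dotv_conj_diag U (d : 'rV[C]_n) v :
  dotv v (adjmx U *m diag_mx d *m U *m v) = \sum_k d 0 k * `|(U *m v) k 0| ^+ 2.
Proof.
rewrite -!mulmxA -dotv_adjmx dotvE; apply: eq_bigr => k _.
by rewrite mul_diag_mx normCK !mxE; ring.
Qed.

Lemma psd_spectral A : psdmx A ->
  exists U (d : 'rV[C]_n), [/\ adjmx U *m U = 1%:M, U *m adjmx U = 1%:M,
     (forall k, 0 <= d 0 k) & A = adjmx U *m diag_mx d *m U].
Proof.
move=> [hA psdA]; have [U [d [UU UU' eA]]] := hermitian_spectral hA.
exists U, d; split => // k; pose v := adjmx U *m delta_mx k (0 : 'I_1).
have := psdA v; rewrite -mulmxA -/(dotv _ _) eA dotv_conj_diag.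
rewrite /v mulmxA UU' mul1mx (bigD1 k) //= big1 => [|j jk]; rewrite !mxE.
  by rewrite !eqxx normr1 expr1n mulr1 addr0.
by rewrite (negbTE jk) normr0 expr0n mulr0.
Qed.

Lemma psd_sqrt_spec A : psdmx A -> psdmx (psd_sqrt A) /\ psd_sqrt A *m psd_sqrt A = A.
Proof.
move=> /psd_spectral [U [d [UU UU' d_ge0 eA]]].
rewrite /psd_sqrt.
apply: (epsilon_spec (inhabits (0 : 'M[C]_n)) (fun B => psdmx B /\ B *m B = A)).
pose e := \row_k sqrtC (d 0 k).
have e_ge0 k : 0 <= e 0 k by rewrite mxE sqrtC_ge0.
exists (adjmx U *m diag_mx e *m U); split; first split.
- rewrite !adjmxM adjmxK adjmx_diag mulmxA; congr (_ *m diag_mx _ *m _).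
  by apply/rowP => k; rewrite !mxE geC0_conj // sqrtC_ge0.
- move=> v; rewrite -mulmxA -/(dotv _ _) dotv_conj_diag.
  by apply: sumr_ge0 => k _; rewrite mulr_ge0 ?exprn_ge0.
- rewrite -!mulmxA (mulmxA U) UU' mul1mx (mulmxA (diag_mx e)) mulmx_diag eA -!mulmxA.
  by congr (_ *m (diag_mx _ *m _)); apply/rowP => k; rewrite !mxE -expr2 sqrtCK.
Qed.

Lemma psd_adjmx_mul X : psdmx (adjmx X *m X).
Proof.
split; first by rewrite adjmxM adjmxK.
by move=> v; rewrite mulmxA -adjmxM -mulmxA dotv_ge0.
Qed.

Lemma mxtrace_psd_ge0 A : psdmx A -> 0 <= \tr A.
Proof.
move=> [_ psdA]; apply: sumr_ge0 => k _.
by have := psdA (delta_mx k 0); rewrite adjmx_delta -rowE -colE !mxE.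
Qed.

End PositiveSquareRoot.

Section TraceNorm.
Variables (C : numClosedFieldType) (n : nat).
Implicit Types (X : 'M[C]_n).

Lemma trnorm_ge0 X : 0 <= trnorm X.
Proof. exact/mxtrace_psd_ge0/(psd_sqrt_spec (psd_adjmx_mul X)).1. Qed.

Lemma trnorm_polar X : exists W V : 'M[C]_n,
  [/\ contractive W, contractive V & trnorm X = \tr (W *m X *m adjmx V)].
Proof.
have [psdB BB] := psd_sqrt_spec (psd_adjmx_mul X).
have [U [d [UU UU' d_ge0 eB]]] := psd_spectral psdB.
rewrite /trnorm; set B := psd_sqrt _ in BB eB *.
pose D := diag_mx d; pose Dp := diag_mx (\row_k (d 0 k)^-1).
have DpDD : Dp *m (D *m D) = D.
  rewrite !mulmx_diag; congr diag_mx; apply/rowP => k; rewrite !mxE.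
  by have [->|/mulKf->] := eqVneq (d 0 k) 0; rewrite ?mulr0.
have DpDDp : Dp *m D *m Dp = Dp.
  rewrite !mulmx_diag; congr diag_mx; apply/rowP => k; rewrite !mxE.
  by have [->|/mulVf->] := eqVneq (d 0 k) 0; rewrite ?invr0 ?mulr0 ?mul1r.
have aDp : adjmx Dp = Dp.
  rewrite adjmx_diag; congr diag_mx; apply/rowP => k.
  by rewrite !mxE geC0_conj ?invr_ge0.
have UXXU : U *m (adjmx X *m X) *m adjmx U = D *m D.
  rewrite -BB eB !mulmxA UU' mul1mx.
  by rewrite -(mulmxA _ U) UU' mulmx1 -(mulmxA _ U) UU' mulmx1.
pose W := X *m adjmx U *m Dp.
have WXU : adjmx W *m X *m adjmx U = Dp *m (D *m D).
  by rewrite /W !adjmxM adjmxK aDp -UXXU !mulmxA.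
exists (adjmx W), U; split.
- apply: partial_isometry_contractive.
  have WW : adjmx W *m W = Dp *m (D *m D) *m Dp by rewrite -WXU /W !mulmxA.
  by rewrite -mulmxA WW DpDD /W -!mulmxA (mulmxA Dp) DpDDp.
- exact: unitary_contractive.
- by rewrite WXU DpDD eB mxtrace_mulC mulmxA UU' mul1mx.
Qed.

Lemma trnorm_rank1_sum (r : seq ('cV[C]_n * 'cV[C]_n)) :
  trnorm (\sum_(w <- r) w.1 *m adjmx w.2) *+ 2
  <= \sum_(w <- r) (dotv w.1 w.1 + dotv w.2 w.2).
Proof.
set X := \sum_(w <- r) _; have [W [V [cW cV eX]]] := trnorm_polar X.
have tr_rank1 u v : \tr (W *m (u *m adjmx v) *m adjmx V) = dotv (V *m v) (W *m u).
  by rewrite mulmxA -mulmxA -adjmxM mxtrace_mulC trace_mx11.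
rewrite mulr2n -{2}(geC0_conj (trnorm_ge0 X)) eX /X mulmx_sumr mulmx_suml raddf_sum.
rewrite rmorph_sum -big_split /=; apply: ler_sum => -[u v] _ /=.
rewrite tr_rank1 conj_dotv addrC.
exact: le_trans (dotv_amgm _ _) (lerD (cW u) (cV v)).
Qed.

End TraceNorm.

Lemma ler_sqrtC_id (C : numClosedFieldType) (x : C) : 0 <= x -> x <= 1 -> x <= sqrtC x.
Proof.
move=> x_ge0 x_le1; rewrite -{1}(sqrtCK x) expr2 ler_piMl ?sqrtC_ge0 //.
by rewrite -sqrtC1 ler_sqrtC // nnegrE.
Qed.

Section Twirl.
Variables (C : numClosedFieldType) (n s : nat) (Ps : 'I_s -> 'M[C]_n) (P : 'M[C]_n).
Hypotheses (hPs : forall i, orth_proj (Ps i)) (hP : orth_proj P)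
  (hPPi : forall i, P *m Ps i = P)
  (hPiPj : forall i j, i != j -> Ps i *m Ps j = P).

Lemma Ps_mulP i : Ps i *m P = P.
Proof. by have := congr1 (@adjmx C n n) (hPPi i); rewrite adjmxM (hPs i).2 hP.2. Qed.

Definition proj_family (k : 'I_s.+1) : 'M[C]_n :=
  if unlift ord0 k is Some i then Ps i - P else P.

Lemma proj_family0 : proj_family ord0 = P.
Proof. by rewrite /proj_family unlift_none. Qed.

Lemma proj_family_lift i : proj_family (lift ord0 i) = Ps i - P.
Proof. by rewrite /proj_family liftK. Qed.

Lemma orth_proj_family k : orth_proj (proj_family k).
Proof.
rewrite /proj_family; case: unlift => [i|//].
split; last by rewrite adjmxB (hPs i).2 hP.2.
by rewrite mulmxBl !mulmxBr (hPs i).1 hPPi Ps_mulP hP.1 subrr subr0.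
Qed.

Lemma proj_family_orth j k : j != k -> proj_family j *m proj_family k = 0.
Proof.
case: (unliftP ord0 j) => [j'|] ->; case: (unliftP ord0 k) => [k'|] ->;
  rewrite ?proj_family0 ?proj_family_lift ?eqxx // => jk.
- move: jk; rewrite (inj_eq lift_inj) => jk.
  by rewrite mulmxBl !mulmxBr hPiPj // hPPi Ps_mulP hP.1 !subrr.
- by rewrite mulmxBl Ps_mulP hP.1 subrr.
- by rewrite mulmxBr hPPi hP.1 subrr.
Qed.

Hypothesis s_gt0 : (0 < s)%N.
Variable psi : 'cV[C]_n.

Let t : C := sqrtC s%:R^-1.
Let a := P *m psi.
Let b i := (Ps i - P) *m psi.

Definition twirl_terms : seq ('cV[C]_n * 'cV[C]_n) :=
  [:: (- t *: a, t *: \sum_i b i), (- t *: \sum_i b i, t *: a)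
    & [seq (- t *: b i, t *: b i) | i <- enum 'I_s]].

Lemma norm_t2 : `|t| ^+ 2 = s%:R^-1.
Proof. by rewrite ger0_norm ?sqrtCK // sqrtC_ge0 invr_ge0 ler0n. Qed.

Lemma twirl_defect_rank1 :
  P *m ketbra psi *m P - s%:R^-1 *: \sum_i Ps i *m ketbra psi *m Ps i
  = \sum_(w <- twirl_terms) w.1 *m adjmx w.2.
Proof.
have ket A : adjmx A = A -> A *m ketbra psi *m A = (A *m psi) *m adjmx (A *m psi).
  by move=> hA; rewrite /ketbra adjmxM hA !mulmxA.
have rank1 u v : (- t *: u) *m adjmx (t *: v) = - (s%:R^-1 *: (u *m adjmx v)).
  by rewrite adjmxZ -scalemxAl -scalemxAr scalerA mulNr -normCK norm_t2 scaleNr.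
rewrite !big_cons big_map big_enum /= !rank1 (ket _ hP.2) -/a.
under eq_bigr do rewrite (ket _ (hPs _).2) -[Ps _ *m psi](subrK a) -mulmxBl -/(b _)
  adjmxD mulmxDl !mulmxDr.
under [X in _ = _ + (_ + X)]eq_bigr do rewrite rank1.
rewrite !big_split /= sumr_const card_ord adjmx_sum mulmx_sumr mulmx_suml.
rewrite !scalerDr -scaler_nat scalerA mulVf ?pnatr_eq0 -?lt0n // scale1r.
rewrite !scaler_sumr sumrN [LHS]addrC !opprD !addrA subrK.
by rewrite [LHS]addrC [LHS]addrA [LHS]addrAC.
Qed.

Lemma twirl_terms_bound : unit_vec psi ->
  \sum_(w <- twirl_terms) (dotv w.1 w.1 + dotv w.2 w.2) <= s%:R^-1 *+ 4.
Proof.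
move=> psi1; have b_lift i : b i = proj_family (lift ord0 i) *m psi.
  by rewrite proj_family_lift.
have bessel : dotv a a + \sum_i dotv (b i) (b i) <= 1.
  rewrite -[1]psi1; under eq_bigr do rewrite b_lift.
  have := bessel_inequality orth_proj_family proj_family_orth psi.
  by rewrite big_ord_recl proj_family0.
have b_orth i j : i != j -> dotv (b i) (b j) = 0.
  move=> ij; rewrite !b_lift dotv_adjmx (orth_proj_family _).2 mulmxA.
  by rewrite proj_family_orth ?(inj_eq lift_inj) // mul0mx /dotv mulmx0 mxE.
rewrite !big_cons big_map big_enum /= !dotvZZ normrN norm_t2 dotv_sum_orth //.
under eq_bigr do rewrite !dotvZZ normrN norm_t2.
rewrite big_split /= -!mulr_sumr.
set x := dotv a a; set y := \sum_k dotv (b k) (b k).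
have y_le1 : y <= 1 by apply: le_trans bessel; rewrite lerDr dotv_ge0.
rewrite -!mulrDr -[_ *+ 4]mulr_natr ler_pM2l ?invr_gt0 ?ltr0n // (addrC y x).
apply: le_trans (lerD bessel (lerD bessel (lerD y_le1 y_le1))) _.
by rewrite !mulrS mulr0n addr0.
Qed.

Lemma trdist_twirl_le : unit_vec psi ->
  trdist (P *m ketbra psi *m P) (s%:R^-1 *: \sum_i Ps i *m ketbra psi *m Ps i)
  <= s%:R^-1.
Proof.
move=> psi1; rewrite /trdist twirl_defect_rank1 ler_pdivrMr ?ltr0n // mulr_natr.
have := le_trans (trnorm_rank1_sum _) (twirl_terms_bound psi1).
by rewrite -[4%N]/(2 * 2)%N mulrnA lerMn2r.
Qed.

End Twirl.

Theorem lemma1 (C : numClosedFieldType) (n s : nat) (hs : (2 <= s)%N)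
  (Ps : 'I_s -> 'M[C]_n) (P : 'M[C]_n)
  (hPs : forall i, orth_proj (Ps i)) (hP : orth_proj P)
  (hcomm : forall i j, Ps i *m Ps j = Ps j *m Ps i)
  (hPPi : forall i, P *m Ps i = P)
  (hPiPj : forall i j, i != j -> Ps i *m Ps j = P) :
  forall psi : 'cV[C]_n, unit_vec psi ->
    trdist (P *m ketbra psi *m P)
           (s%:R^-1 *: \sum_(i < s) (Ps i *m ketbra psi *m Ps i))
    <= sqrtC (s%:R^-1).
Proof.
move=> psi psi1; have s_gt0 : (0 < s)%N by apply: leq_trans hs.
apply: le_trans (trdist_twirl_le hPs hP hPPi hPiPj s_gt0 psi1) _.
by rewrite ler_sqrtC_id ?invr_ge0 ?invf_le1 ?ler0n ?ltr0n ?ler1n.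
Qed.
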